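(* Let $\Sigma\in\mathcal{G}_n$ and let $Q_0$ be the unique regular rational orthogonal matrix with $Q_0^{\rm T}S(\Sigma)Q_0=S(\Sigma^{\rm T})$; suppose its level is $\ell_0=p_1p_2$ with $p_1,p_2$ distinct odd primes. Suppose $\Sigma$ is not WDGSS and that its generalized cospectral mates (up to isomorphism) are $\Sigma^{\rm T}$, $\Delta$ and $\Delta^{\rm T}$. Let $Q_1\in\mathcal{Q}(\Sigma)$ of level $p_1$ satisfy $Q_1^{\rm T}S(\Sigma)Q_1=S(\Delta)$, and let $Q_2$ be a regular rational orthogonal matrix of level $p_2$ satisfying $Q_2^{\rm T}S(\Delta)Q_2=S(\Sigma^{\rm T})$. If $\hat Q_0$ is a regular rational orthogonal matrix with $\hat Q_0^{\rm T}S(\Delta^{\rm T})\hat Q_0=S(\Delta)$, then $\hat Q_0=Q_2Q_1$ and the level of $\hat Q_0$ is $p_1p_2$.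
   Context: An oriented graph on vertices $v_1,\dots,v_n$ is a simple graph with each edge directed; its skew-adjacency matrix $S=(s_{ij})$ has $s_{ij}=1$ if $(v_i,v_j)$ is an arc, $-1$ if $(v_j,v_i)$ is an arc, $0$ otherwise. The converse $\Delta^{\rm T}$ of $\Delta$ reverses every arc, so $S(\Delta^{\rm T})=-S(\Delta)$. Two oriented graphs are isomorphic if their skew-adjacency matrices are conjugate by a permutation matrix; they are generalized cospectral if their skew-adjacency matrices $S$ have the same spectrum and the matrices $J-I-S$ have the same spectrum. A generalized cospectral mate of $\Sigma$ is an oriented graph generalized cospectral with but not isomorphic to $\Sigma$. $\Sigma$ is WDGSS if every oriented graph generalized cospectral with $\Sigma$ is isomorphic to $\Sigma$ or $\Sigma^{\rm T}$. With $e$ the all-one vector, $W(\Sigma)=[e,Se,\dots,S^{n-1}e]$, $S=S(\Sigma)$. $\mathcal{G}_n$ is the set of $n$-vertex oriented graphs with $2^{-\lfloor n/2\rfloor}\det W(\Sigma)$ an odd square-free integer. A rational orthogonal matrix $Q$ is regular if $Qe=e$; its level is the least positive integer $k$ with $kQ$ integral. $\mathcal{Q}(\Sigma)$ is the set of regular rational orthogonal $Q$ with $Q^{\rm T}S(\Sigma)Q=S(\Gamma)$ for some oriented graph $\Gamma$ generalized cospectral with $\Sigma$. *)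

From HB Require Import structures.
From mathcomp Require Import all_boot all_order all_algebra all_fingroup.
Set Implicit Arguments. Unset Strict Implicit. Unset Printing Implicit Defensive.
Import Order.TTheory GRing.Theory Num.Theory.
Local Open Scope ring_scope.

(* An oriented graph on n vertices is represented by its skew-adjacency
   matrix S : entries in {0,1,-1}, S^T = -S (hence zero diagonal). *)
Definition is_oriented (n : nat) (S : 'M[rat]_n) : Prop :=
  (forall i j, S i j \in [:: 0; 1; -1]) /\ S^T = - S.

Definition converse (n : nat) (S : 'M[rat]_n) : 'M[rat]_n := - S.

Definition og_iso (n : nat) (S1 S2 : 'M[rat]_n) : Prop :=
  exists s : 'S_n, (perm_mx s)^T *m S1 *m perm_mx s = S2.

Definition allones (n : nat) : 'M[rat]_n := const_mx 1.

Definition gen_cospectral (n : nat) (S1 S2 : 'M[rat]_n) : Prop :=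
  char_poly S1 = char_poly S2 /\
  char_poly (allones n - 1%:M - S1) = char_poly (allones n - 1%:M - S2).

Definition WDGSS (n : nat) (S : 'M[rat]_n) : Prop :=
  forall G : 'M[rat]_n, is_oriented G -> gen_cospectral S G ->
    og_iso S G \/ og_iso (converse S) G.

Definition walk_mx (n : nat) (S : 'M[rat]_n) : 'M[rat]_n :=
  \matrix_(i < n, j < n) ((S ^+ j) *m (const_mx 1 : 'cV[rat]_n)) i ord0.

Definition squarefree (m : nat) : Prop :=
  forall p, prime p -> ~~ (p * p %| m)%N.

Definition in_Gn (n : nat) (S : 'M[rat]_n) : Prop :=
  is_oriented S /\
  exists m : int, \det (walk_mx S) = (2 ^+ n./2) * m%:~R /\
                  odd `|m|%N /\ squarefree `|m|%N.

Definition reg_orth (n : nat) (Q : 'M[rat]_n) : Prop :=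
  Q^T *m Q = 1%:M /\ Q *m (const_mx 1 : 'cV[rat]_n) = const_mx 1.

Definition integral_mx (n : nat) (A : 'M[rat]_n) : Prop :=
  forall i j, A i j \is a Num.int.

Definition has_level (n : nat) (Q : 'M[rat]_n) (k : nat) : Prop :=
  (0 < k)%N /\ integral_mx (k%:R *: Q) /\
  forall j : nat, (0 < j)%N -> integral_mx (j%:R *: Q) -> (k <= j)%N.

From HB Require Import structures.
From mathcomp Require Import all_boot all_order all_algebra all_fingroup.
Import Order.TTheory GRing.Theory Num.Theory.
Local Open Scope ring_scope.
Set Implicit Arguments.

(* A regular orthogonal Q intertwines S and Q^T S Q, and fixes the all-one
   vector, so Q^T W(S) = W(Q^T S Q). When W(S) is invertible this determines Q,
   hence Qh = Q2 Q1, both conjugating Del to its converse. The level of a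
   product of regular orthogonal matrices of coprime levels k1, k2 is k1 k2:
   if j Q2 Q1 is integral, so is (k2 Q2)^T (j Q2 Q1) = k2 j Q1, whence k1 | j,
   and symmetrically k2 | j. *)

Section RegularOrthogonal.

Variable n : nat.
Implicit Types A B Q X : 'M[rat]_n.

Lemma reg_orth_mulmx_tr Q : reg_orth Q -> Q *m Q^T = 1%:M.
Proof. by case=> /mulmx1C. Qed.

Lemma reg_orth_tr_const Q :
  reg_orth Q -> Q^T *m (const_mx 1 : 'cV[rat]_n) = const_mx 1.
Proof. by case=> QtQ Qe; rewrite -{1}Qe mulmxA QtQ mul1mx. Qed.

Lemma reg_orth_mul A B : reg_orth A -> reg_orth B -> reg_orth (A *m B).
Proof.
case=> AtA Ae [BtB Be]; split; last by rewrite -mulmxA Be Ae.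
by rewrite trmx_mul -mulmxA (mulmxA A^T) AtA mul1mx.
Qed.

Lemma conj_mulmx A B X :
  (A *m B)^T *m X *m (A *m B) = B^T *m (A^T *m X *m A) *m B.
Proof. by rewrite trmx_mul !mulmxA. Qed.

Lemma conj_opp A X : A^T *m - X *m A = - (A^T *m X *m A).
Proof. by rewrite mulmxN mulNmx. Qed.

Lemma reg_orth_exp_intertwine Q X k :
  reg_orth Q -> Q^T *m X ^+ k = (Q^T *m X *m Q) ^+ k *m Q^T.
Proof.
move=> QQ; set Y := Q^T *m X *m Q.
have intertwine : Q^T *m X = Y *m Q^T.
  by rewrite /Y -mulmxA reg_orth_mulmx_tr // mulmx1.
elim: k => [|k IH]; first by rewrite !expr0 mulmx1 mul1mx.
by rewrite !exprS -!mulmxE mulmxA intertwine -!mulmxA IH.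
Qed.

Lemma reg_orth_walk_mx Q X :
  reg_orth Q -> Q^T *m walk_mx X = walk_mx (Q^T *m X *m Q).
Proof.
move=> QQ; apply/matrixP => i j.
transitivity ((Q^T *m (X ^+ j *m (const_mx 1 : 'cV[rat]_n))) i ord0).
  by rewrite !mxE; apply: eq_bigr => k _; rewrite !mxE.
rewrite mulmxA reg_orth_exp_intertwine // -mulmxA reg_orth_tr_const //.
by rewrite /walk_mx mxE.
Qed.

Lemma reg_orth_unitmx Q : reg_orth Q -> Q \in unitmx.
Proof. by move/reg_orth_mulmx_tr/mulmx1_unit=> []. Qed.

Lemma walk_mx_unit_conj Q X :
  reg_orth Q -> walk_mx X \in unitmx -> walk_mx (Q^T *m X *m Q) \in unitmx.
Proof.
move=> QQ WX; rewrite -reg_orth_walk_mx // unitmx_mul WX andbT.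
by rewrite unitmx_tr reg_orth_unitmx.
Qed.

Lemma reg_orth_conj_uniq A B X :
  walk_mx X \in unitmx -> reg_orth A -> reg_orth B ->
  A^T *m X *m A = B^T *m X *m B -> A = B.
Proof.
move=> WX AA BB AB; apply: trmx_inj.
by rewrite -(mulmxK WX A^T) reg_orth_walk_mx // AB -reg_orth_walk_mx // mulmxK.
Qed.

End RegularOrthogonal.

Lemma in_Gn_walk_mx_unit (n : nat) (S : 'M[rat]_n) :
  in_Gn S -> walk_mx S \in unitmx.
Proof.
case=> _ [m [detW [odd_m _]]]; rewrite unitmxE unitfE detW mulf_neq0 ?expf_neq0 //.
by rewrite intr_eq0; apply: contraTneq odd_m => ->.
Qed.

Section Level.

Variable n : nat.
Implicit Types A B Q : 'M[rat]_n.

Lemma integral_mx_mul A B :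
  integral_mx A -> integral_mx B -> integral_mx (A *m B).
Proof.
by move=> IA IB i j; rewrite mxE; apply: rpred_sum => k _; apply: rpredM.
Qed.

Lemma integral_mx_tr A : integral_mx A -> integral_mx A^T.
Proof. by move=> IA i j; rewrite mxE. Qed.

Lemma integral_mx_sub A B :
  integral_mx A -> integral_mx B -> integral_mx (A - B).
Proof. by move=> IA IB i j; rewrite !mxE rpredB. Qed.

Lemma integral_mx_scale_nat A m : integral_mx A -> integral_mx (m%:R *: A).
Proof. by move=> IA i j; rewrite mxE rpredM ?rpred_nat. Qed.

Lemma has_level_dvd Q k j :
  has_level Q k -> (0 < j)%N -> integral_mx (j%:R *: Q) -> (k %| j)%N.
Proof.
case=> k_gt0 [IkQ k_min] j_gt0 IjQ; apply/negPn/negP => kNj.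
have : (k <= j %% k)%N.
  apply: k_min; first by rewrite lt0n.
  have -> : (j %% k)%:R *: Q = j%:R *: Q - (j %/ k)%:R *: (k%:R *: Q).
    by rewrite scalerA -natrM {2}(divn_eq j k) natrD scalerDl addrAC subrr add0r.
  by apply: integral_mx_sub => //; apply: integral_mx_scale_nat.
by rewrite leqNgt ltn_pmod.
Qed.

Lemma has_level_mul_coprime A B k1 k2 :
  reg_orth A -> reg_orth B -> has_level A k2 -> has_level B k1 ->
  coprime k1 k2 -> has_level (A *m B) (k1 * k2).
Proof.
move=> AA BB LA LB co12; have [k2_gt0 [IA _]] := LA; have [k1_gt0 [IB _]] := LB.
split; first by rewrite muln_gt0 k1_gt0.
split.
  have -> : (k1 * k2)%:R *: (A *m B) = (k2%:R *: A) *m (k1%:R *: B).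
    by rewrite -scalemxAl -scalemxAr scalerA -natrM mulnC.
  exact: integral_mx_mul.
move=> j j_gt0 IjAB.
have k1_dvd : (k1 %| k2 * j)%N.
  apply: (has_level_dvd _ LB); first by rewrite muln_gt0 k2_gt0.
  have -> : (k2 * j)%:R *: B = (k2%:R *: A)^T *m (j%:R *: (A *m B)).
    rewrite [(_ *: A)^T]linearZ /= -scalemxAl -scalemxAr scalerA mulmxA.
    by case: AA => -> _; rewrite mul1mx natrM.
  by apply: integral_mx_mul => //; apply: integral_mx_tr.
have k2_dvd : (k2 %| j * k1)%N.
  apply: (has_level_dvd _ LA); first by rewrite muln_gt0 j_gt0.
  have -> : (j * k1)%:R *: A = (j%:R *: (A *m B)) *m (k1%:R *: B)^T.
    rewrite [(_ *: B)^T]linearZ /= -scalemxAl -scalemxAr scalerA -mulmxA.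
    by rewrite reg_orth_mulmx_tr // mulmx1 natrM.
  by apply: integral_mx_mul => //; apply: integral_mx_tr.
rewrite (Gauss_dvdr _ co12) in k1_dvd.
rewrite (Gauss_dvdl _ (_ : coprime k2 k1)) 1?coprime_sym // in k2_dvd.
by apply: dvdn_leq => //; rewrite Gauss_dvd // k1_dvd.
Qed.

End Level.

Theorem lemma5p3 (n : nat) (Sig Del Q0 Q1 Q2 Qh : 'M[rat]_n) (p1 p2 : nat) :
  in_Gn Sig ->
  reg_orth Q0 -> Q0^T *m Sig *m Q0 = converse Sig ->
  prime p1 -> prime p2 -> odd p1 -> odd p2 -> p1 != p2 ->
  has_level Q0 (p1 * p2) ->
  ~ WDGSS Sig ->
  is_oriented Del -> gen_cospectral Sig Del ->
  (* the mates Sig^T, Del, Del^T are pairwise non-isomorphic and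
     non-isomorphic to Sig *)
  ~ og_iso Sig (converse Sig) ->
  ~ og_iso Sig Del -> ~ og_iso (converse Sig) Del ->
  ~ og_iso Del (converse Del) ->
  (forall G : 'M[rat]_n, is_oriented G -> gen_cospectral Sig G ->
     [\/ og_iso Sig G, og_iso (converse Sig) G, og_iso Del G
       | og_iso (converse Del) G]) ->
  reg_orth Q1 -> has_level Q1 p1 -> Q1^T *m Sig *m Q1 = Del ->
  reg_orth Q2 -> has_level Q2 p2 -> Q2^T *m Del *m Q2 = converse Sig ->
  reg_orth Qh -> Qh^T *m converse Del *m Qh = Del ->
  Qh = Q2 *m Q1 /\ has_level Qh (p1 * p2).
Proof.
move=> GSig _ _ P1 P2 _ _ p1Np2 _ _ _ _ _ _ _ _ _ R1 L1 conj1 R2 L2 conj2 Rh conjh.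
have WDel : walk_mx Del \in unitmx.
  by rewrite -conj1 walk_mx_unit_conj // in_Gn_walk_mx_unit.
have Qh_eq : Qh = Q2 *m Q1.
  apply: (reg_orth_conj_uniq WDel Rh (reg_orth_mul R2 R1)).
  rewrite conj_mulmx conj2 /converse conj_opp conj1.
  by apply/eqP; rewrite -eqr_oppLR -conj_opp conjh.
split=> //; rewrite Qh_eq.
by apply: has_level_mul_coprime => //; rewrite prime_coprime // dvdn_prime2.
Qed.
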